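(* Let $\mathfrak{X}$ be a Bourgain–Delbaen space determined by $(\Gamma_q,i_q)_q$, let $\Gamma'$ be an infinite subset of $\Gamma$, for all $q$ set $\Gamma_q'=\Gamma'\cap\Gamma_q$, $\Delta_q'=\Gamma'\cap\Delta_q$, and let $q_0=\min\{q:\Gamma_q'\neq\varnothing\}$. The following are equivalent: (a) $\Gamma'$ is self-determined; (b) for all $q\geqslant q_0$, $\langle\{d_\gamma^*:\gamma\in\Gamma_q'\}\rangle=\langle\{e_\gamma^*:\gamma\in\Gamma_q'\}\rangle$; (c) $\langle\{d_\gamma^*:\gamma\in\Gamma_{q_0}'\}\rangle=\langle\{e_\gamma^*:\gamma\in\Gamma_{q_0}'\}\rangle$ and for all $q\geqslant q_0$, $\langle\{c_\gamma^*:\gamma\in\Delta_{q+1}'\}\rangle\subset\langle\{e_\gamma^*\circ P_E:\gamma\in\Gamma_q',\ E\text{ an interval of }\mathbb{N}\}\rangle$; (d) for all $\gamma\in\Gamma\setminus\Gamma'$ and $\eta\in\Gamma'$, $e_\eta^*(d_\gamma)=0$; (e) for all $\gamma\in\Gamma\setminus\Gamma'$ and $\eta\in\Gamma'$, $c_\eta^*(d_\gamma)=0$.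
   Context: Bourgain–Delbaen spaces: $(\Gamma_q)_{q\geqslant1}$ is a strictly increasing sequence of non-empty finite sets, $\Gamma=\bigcup_q\Gamma_q$, and $i_q:\ell_\infty(\Gamma_q)\to\ell_\infty(\Gamma)$ are linear extension operators (i.e. $i_q(x)|_{\Gamma_q}=x$) with $C=\sup_q\|i_q\|<\infty$, which are compatible: for $p<q$, $i_p=i_q\circ r_q\circ i_p$, where $r_q:\ell_\infty(\Gamma)\to\ell_\infty(\Gamma_q)$ is restriction. Set $\Delta_1=\Gamma_1$, $\Delta_{q+1}=\Gamma_{q+1}\setminus\Gamma_q$, and for $\gamma\in\Delta_q$ let $d_\gamma=i_q(e_\gamma)$. The space $\mathfrak{X}$ is the closed linear span of $\{d_\gamma:\gamma\in\Gamma\}$ in $\ell_\infty(\Gamma)$. With $M_q=\langle\{d_\gamma:\gamma\in\Delta_q\}\rangle$, $(M_q)_q$ is an FDD of $\mathfrak{X}$ and $P_E$ denotes the associated projection onto $\bigoplus_{q\in E}M_q$ for an interval $E\subset\mathbb{N}$. For $\gamma\in\Gamma$, $e_\gamma^*$ is the evaluation at coordinate $\gamma$ restricted to $\mathfrak{X}$, $(d_\gamma^* )_{\gamma\in\Gamma}$ are the functionals biorthogonal to the basis $(d_\gamma)_\gamma$ (for $\gamma\in\Delta_q$, $d_\gamma^*=e_\gamma^*\circ P_{\{q\}}$), and $c_\gamma^*=e_\gamma^*-d_\gamma^*$. An infinite subset $\Gamma'\subseteq\Gamma$ is self-determined if for every $\gamma\in\Gamma'$ the functional $d_\gamma^*$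 lies in the linear span of $\{e_\eta^*:\eta\in\Gamma'\}$. $\langle\cdot\rangle$ denotes linear span. *)

From HB Require Import structures.
From mathcomp Require Import all_boot all_order all_algebra.
From mathcomp Require Import reals.
Set Implicit Arguments. Unset Strict Implicit. Unset Printing Implicit Defensive.
Import Order.TTheory GRing.Theory Num.Theory.
Local Open Scope ring_scope.

Definition restrict (G : Type) (lev : G -> nat) (R : Type) (q : nat)
  (x : G -> R) : {g : G | (lev g <= q)%N} -> R := fun g => x (sval g).
Arguments restrict {G} lev {R} q x g.

(* Bourgain--Delbaen data (Gamma_q, i_q)_q.  [lev g] is the unique q with
   g in Delta_q, so Gamma_q = {g | lev g <= q} and Gamma = union of Gamma_q.
   Elements of l_oo(Gamma) are represented by functions G -> R. *)
Record BDspace (R : realType) := BDSpace {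
  bd_G : eqType;
  bd_lev : bd_G -> nat;
  bd_lev_ge1 : forall g, (1 <= bd_lev g)%N;
  bd_Delta_fin : forall q, exists s : seq bd_G, forall g, bd_lev g = q -> g \in s;
  bd_Delta_nonempty : forall q, (1 <= q)%N -> exists g, bd_lev g = q;
  bd_ext : forall q : nat, ({g : bd_G | (bd_lev g <= q)%N} -> R) -> bd_G -> R;
  bd_ext_linear : forall q, (1 <= q)%N -> forall (a : R) (x y : {g : bd_G | (bd_lev g <= q)%N} -> R),
    @bd_ext q (fun g => a * x g + y g) = (fun t => a * @bd_ext q x t + @bd_ext q y t);
  bd_ext_extends : forall q, (1 <= q)%N -> forall (x : {g : bd_G | (bd_lev g <= q)%N} -> R) g, @bd_ext q x (sval g) = x g;
  bd_C : R;
  bd_ext_bounded : forall q, (1 <= q)%N -> forall (x : {g : bd_G | (bd_lev g <= q)%N} -> R) (M : R),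
    (forall g, `|x g| <= M) -> forall t, `|@bd_ext q x t| <= bd_C * M;
  bd_compat : forall p q, (1 <= p)%N -> (p < q)%N -> forall (x : {g : bd_G | (bd_lev g <= p)%N} -> R),
    @bd_ext p x = @bd_ext q (restrict bd_lev q (@bd_ext p x))
}.

Arguments bd_ext {R} b q x t.
Arguments bd_lev {R} b g.
Arguments bd_G {R} b.

Section BD.
Variables (R : realType) (B : BDspace R).
Local Notation G := (bd_G B).
Local Notation lev := (bd_lev B).

(* i_q o r_q  (with i_0 r_0 := 0, as Gamma_0 is empty) *)
Definition Qproj (q : nat) (x : G -> R) : G -> R :=
  match q with
  | 0%N => fun _ => 0
  | _ => bd_ext B q (restrict lev q x)
  end.

Definition unitvec (q : nat) (g : G) : {h : G | (lev h <= q)%N} -> R :=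
  fun h => if sval h == g then 1 else 0.

Definition dvec (g : G) : G -> R := bd_ext B (lev g) (@unitvec (lev g) g).

Definition in_span_d (y : G -> R) : Prop :=
  exists n (a : 'I_n -> R) (g : 'I_n -> G),
    y = (fun t => \sum_(i < n) a i * dvec (g i) t).

Definition inX (x : G -> R) : Prop :=
  forall eps : R, 0 < eps ->
    exists y, in_span_d y /\ forall t, `|x t - y t| <= eps.

(* intervals of N: [a,b] (empty if b < a) or [a, oo) *)
Inductive nat_interval := Ifin of nat & nat | Iinf of nat.

(* P_E ; on X it is the FDD projection onto (+)_{q in E} M_q,
   since P_[1,q] = i_q r_q on X *)
Definition PE (E : nat_interval) (x : G -> R) : G -> R :=
  match E with
  | Ifin a b => if (a <= b)%N then (fun t => Qproj b x t - Qproj a.-1 x t)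
                else (fun _ => 0)
  | Iinf a => fun t => x t - Qproj a.-1 x t
  end.

(* functionals (only their values on X matter) *)
Definition functional := (G -> R) -> R.

Definition estar (g : G) : functional := fun x => x g.
Definition dstar (g : G) : functional :=
  fun x => PE (Ifin (lev g) (lev g)) x g.
Definition cstar (g : G) : functional := fun x => estar g x - dstar g x.

Definition in_span (S : functional -> Prop) (f : functional) : Prop :=
  exists n (a : 'I_n -> R) (phi : 'I_n -> functional),
    (forall i, S (phi i)) /\
    forall x, inX x -> f x = \sum_(i < n) a i * phi i x.

Definition span_incl (S T : functional -> Prop) : Prop :=
  forall f, in_span S f -> in_span T f.

Definition span_eq (S T : functional -> Prop) : Prop :=
  span_incl S T /\ span_incl T S.

Definition infinite_subset (G' : G -> Prop) : Prop :=
  ~ exists s : seq G, forall g, G' g -> g \in s.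

Definition self_determined (G' : G -> Prop) : Prop :=
  infinite_subset G' /\
  forall g, G' g -> in_span (fun f => exists h, G' h /\ f = estar h) (dstar g).

End BD.

(* On the whole of l_oo(Gamma), i_q r_q x = sum_{lev d <= q} d*_d(x) d_d.  Hence
   e*_h = sum_{lev d <= lev h} d_d(h) d*_d and c*_h = sum_{lev d < lev h} d_d(h) d*_d,
   while d*_e(d_d) = [e = d], and every condition is equivalent to (d): d_g vanishes on
   G' for g outside G'.  Under (d) only coordinates of G' occur in these expansions, which
   gives (a), (b), (c) and (e) after inverting the unitriangular relation between the e*_h
   and the d*_h by induction on the level.  Conversely (b) and (c) give (d) by evaluating
   the spanning relations at d_g.  From (a), a relation d*_h = sum a_i e*_{h_i} with h_i in
   G' can be truncated at the level of h, since d*_h kills every d_d of higher level;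
   evaluated at d_g, the truncated relation gives d_g(h) = 0 by induction on the level. *)

From HB Require Import structures.
From mathcomp Require Import all_boot all_order all_algebra.
From mathcomp Require Import boolp reals.
Set Implicit Arguments. Unset Strict Implicit. Unset Printing Implicit Defensive.
Import Order.TTheory GRing.Theory Num.Theory.
Local Open Scope ring_scope.

Section BourgainDelbaen.
Variables (R : realType) (B : BDspace R).
Local Notation G := (bd_G B).
Local Notation lev := (bd_lev B).
Local Notation ext := (bd_ext B).
Local Notation functional := (functional B).

Lemma lev_ind (P : G -> Prop) :
  (forall h, (forall h', (lev h' < lev h)%N -> P h') -> P h) -> forall h, P h.
Proof.
move=> IH h; move: {2}(lev h) (leqnn (lev h)) => n.
elim: n h => [|n IHn] h Hh; apply: IH => h' lt_h'h.
  by move: (leq_trans lt_h'h Hh).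
by apply: IHn; rewrite -ltnS (leq_trans lt_h'h Hh).
Qed.

Lemma ext0 q : (1 <= q)%N -> ext q (fun _ => 0) = (fun _ => 0).
Proof.
move=> q_gt0; have := @bd_ext_linear _ B _ q_gt0 1 (fun _ => 0) (fun _ => 0); cbv beta.
rewrite mulr0 addr0 => E; apply: funext => t.
move: (congr1 (fun f => f t) E) => /=; rewrite mul1r.
by move=> /(congr1 (fun z => z - ext q (fun=> 0) t)); rewrite subrr addrK.
Qed.

Lemma ext_lincomb q (I : Type) (r : seq I) (c : I -> R) u y : (1 <= q)%N ->
  ext q (fun g => \sum_(i <- r) c i * u i g + y g) =
  (fun t => \sum_(i <- r) c i * ext q (u i) t + ext q y t).
Proof.
move=> q_gt0; elim: r => [|i r IHr].
  apply: funext => t; rewrite big_nil add0r; congr ext.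
  by apply: funext => g; rewrite big_nil add0r.
rewrite (_ : (fun g => _) = (fun g => c i * u i g + (\sum_(j <- r) c j * u j g + y g))).
  by rewrite bd_ext_linear // IHr; apply: funext => t; rewrite big_cons addrA.
by apply: funext => g; rewrite big_cons addrA.
Qed.

Lemma dvec_ge (d h : G) : (lev h <= lev d)%N -> dvec d h = (h == d)%:R.
Proof.
move=> le_hd; rewrite /dvec (bd_ext_extends _ _ (exist _ h le_hd)) ?bd_lev_ge1 //.
by rewrite /unitvec /=; case: (h == d).
Qed.

Lemma dvec_lt (d h : G) : (lev h < lev d)%N -> dvec d h = 0.
Proof.
move=> lt_hd; rewrite dvec_ge; last exact: ltnW.
by case: eqP lt_hd => // ->; rewrite ltnn.
Qed.

Lemma dvec_lev q (d : G) : lev d = q -> dvec d = ext q (unitvec (q:=q) d).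
Proof. by move=> <-. Qed.

Lemma Qproj_id q x (t : G) : (lev t <= q)%N -> Qproj q x t = x t.
Proof.
move=> le_tq; have := leq_trans (bd_lev_ge1 t) le_tq.
case: q le_tq => // q le_tq q_gt0.
exact: (bd_ext_extends q_gt0 _ (exist _ t le_tq)).
Qed.

Lemma Qproj_ext p q u : (1 <= p)%N -> (p <= q)%N -> Qproj q (ext p u) = ext p u.
Proof.
move=> p_gt0; rewrite leq_eqVlt => /orP[/eqP <-|lt_pq].
  case: p p_gt0 u => // p _ u /=; congr ext; apply: funext => g.
  exact: bd_ext_extends.
by case: q lt_pq => // q lt_pq /=; rewrite -bd_compat.
Qed.

Lemma Qproj_Qproj q (x : G -> R) : Qproj q.+1 (Qproj q x) = Qproj q x.
Proof.
case: q => [|q]; last exact: Qproj_ext.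
by rewrite /= (_ : restrict lev 1 _ = fun _ => 0) // ext0.
Qed.

Lemma Qproj_dvec q (d : G) :
  Qproj q (dvec d) = if (lev d <= q)%N then dvec d else (fun _ => 0).
Proof.
case: ifPn => [le_dq|]; first by rewrite Qproj_ext ?bd_lev_ge1.
rewrite -ltnNge; case: q => // q lt_qd /=.
rewrite (_ : restrict lev q.+1 _ = fun _ => 0) ?ext0 //.
by apply: funext => g; rewrite /restrict dvec_lt // (leq_ltn_trans (svalP g)).
Qed.

Lemma PE_dvec_eq0 E (d h : G) : dvec d h = 0 -> PE E (dvec d) h = 0.
Proof.
move=> dh0; have Q0 q : Qproj q (dvec d) h = 0 by rewrite Qproj_dvec; case: ifP.
case: E => [a b|a] /=; last by rewrite dh0 Q0 subr0.
by case: ifP => // _; rewrite !Q0 subr0.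
Qed.

Lemma dstarE (d : G) x : dstar d x = x d - Qproj (lev d).-1 x d.
Proof. by rewrite /dstar /= leqnn Qproj_id. Qed.

Lemma cstarE (d : G) x : cstar d x = Qproj (lev d).-1 x d.
Proof. by rewrite /cstar dstarE /estar opprB addrC subrK. Qed.

Lemma leq_lev_pred (d h : G) : (lev d <= (lev h).-1)%N = (lev d < lev h)%N.
Proof. by case: (lev h) (bd_lev_ge1 h). Qed.

Lemma dstar_dvec (e d : G) : dstar e (dvec d) = (e == d)%:R.
Proof.
rewrite dstarE Qproj_dvec leq_lev_pred; case: ltnP => [lt_de|le_ed].
  by rewrite subrr; case: eqP lt_de => // ->; rewrite ltnn.
by rewrite subr0 dvec_ge.
Qed.

Lemma cstar_dvec_neq (e d : G) : e != d -> cstar e (dvec d) = dvec d e.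
Proof. by rewrite /cstar dstar_dvec => /negbTE ->; rewrite subr0. Qed.

Lemma inX_dvec (d : G) : inX (dvec d).
Proof.
move=> eps eps_gt0; exists (dvec d); split=> [|t]; last by rewrite subrr normr0 ltW.
exists 1%N, (fun _ => 1), (fun _ => d).
by apply: funext => t; rewrite big_ord1 mul1r.
Qed.

Definition level (q : nat) : seq G :=
  undup [seq d <- sval (cid (bd_Delta_fin B q)) | lev d == q].

Fixpoint levels_upto (q : nat) : seq G :=
  if q is p.+1 then levels_upto p ++ level q else [::].

Lemma mem_level q d : (d \in level q) = (lev d == q).
Proof.
rewrite mem_undup mem_filter andb_idr // => /eqP.
exact: (svalP (cid (bd_Delta_fin B q))).
Qed.

Lemma mem_levels_upto q d : (d \in levels_upto q) = (lev d <= q)%N.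
Proof.
elim: q => [|q IHq] /=; first by rewrite leqNgt bd_lev_ge1.
by rewrite mem_cat IHq mem_level orbC -ltnS -leq_eqVlt.
Qed.

Lemma sum_level_indicator q (h : G) (F : G -> R) :
  lev h = q -> \sum_(d <- level q) (h == d)%:R * F d = F h.
Proof.
move=> hq; have h_in : h \in level q by rewrite mem_level hq.
rewrite (big_rem h) //= eqxx mul1r big1_seq ?addr0 // => d /andP[_ d_in].
by case: eqP d_in => [<-|_]; rewrite ?mem_rem_uniqF ?undup_uniq ?mul0r.
Qed.

Lemma Qproj_succ q (x : G -> R) t :
  Qproj q.+1 x t = Qproj q x t + \sum_(d <- level q.+1) dstar d x * dvec d t.
Proof.
rewrite [LHS]/=.
have -> : restrict lev q.+1 x = fun g =>
    \sum_(d <- level q.+1) dstar d x * unitvec (q:=q.+1) d g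
    + restrict lev q.+1 (Qproj q x) g.
  apply: funext => -[u le_uq]; rewrite /restrict /unitvec /=.
  move: le_uq; rewrite leq_eqVlt ltnS => /orP[/eqP uq|le_uq].
    rewrite (eq_bigr (fun d => (u == d)%:R * dstar d x)) => [|d _]; last first.
      by rewrite mulrC; case: (u == d).
    by rewrite sum_level_indicator // dstarE uq subrK.
  rewrite big1_seq ?add0r ?Qproj_id // => d /andP[_].
  rewrite mem_level => /eqP dq; case: (u =P d) => [ud|_]; last by rewrite mulr0.
  by move: le_uq; rewrite ud dq ltnn.
rewrite ext_lincomb // -/(Qproj q.+1 (Qproj q x)) Qproj_Qproj addrC; congr (_ + _).
by apply: eq_big_seq => d; rewrite mem_level => /eqP /dvec_lev ->.
Qed.

Lemma Qproj_expansion q (x : G -> R) t :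
  Qproj q x t = \sum_(d <- levels_upto q) dstar d x * dvec d t.
Proof.
elim: q => [|q IHq]; first by rewrite big_nil.
by rewrite Qproj_succ IHq /= big_cat.
Qed.

Lemma estar_expansion (h : G) x :
  estar h x = \sum_(d <- levels_upto (lev h)) dstar d x * dvec d h.
Proof. by rewrite -Qproj_expansion Qproj_id. Qed.

Lemma cstar_expansion (h : G) x :
  cstar h x = \sum_(d <- levels_upto (lev h).-1) dstar d x * dvec d h.
Proof. by rewrite -Qproj_expansion cstarE. Qed.

Implicit Types (S T : functional -> Prop) (f : functional).

Lemma in_span_ext S f f' : (forall x, inX x -> f x = f' x) -> in_span S f' -> in_span S f.
Proof.
move=> eq_ff' [n [a [phi [Sphi f'E]]]]; exists n, a, phi; split=> // x Xx.
by rewrite eq_ff' // f'E.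
Qed.

Lemma sub_in_span S T f : (forall g, S g -> T g) -> in_span S f -> in_span T f.
Proof. by move=> ST [n [a [phi [Sphi fE]]]]; exists n, a, phi; split=> // i; apply: ST. Qed.

Lemma in_span_mem S f : S f -> in_span S f.
Proof.
move=> Sf; exists 1%N, (fun _ => 1), (fun _ => f); split=> // x _.
by rewrite big_ord1 mul1r.
Qed.

Lemma in_span0 S : in_span S (fun _ => 0).
Proof. by exists 0%N, (fun _ => 0), (fun _ _ => 0); split=> [[]|x _]; rewrite ?big_ord0. Qed.

Lemma in_spanD S f f' : in_span S f -> in_span S f' -> in_span S (fun x => f x + f' x).
Proof.
move=> [n [a [phi [Sphi fE]]]] [n' [a' [phi' [Sphi' f'E]]]].
exists (n + n')%N, (fun i => match split i with inl j => a j | inr j => a' j end),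
  (fun i => match split i with inl j => phi j | inr j => phi' j end).
split=> [i|x Xx]; first by case: (split i).
rewrite big_split_ord fE // f'E //.
by congr (_ + _); apply: eq_bigr => i _; rewrite ?(unsplitK (inl i)) ?(unsplitK (inr i)).
Qed.

Lemma in_spanZ S c f : in_span S f -> in_span S (fun x => c * f x).
Proof.
move=> [n [a [phi [Sphi fE]]]]; exists n, (fun i => c * a i), phi; split=> // x Xx.
by rewrite fE // mulr_sumr; apply: eq_bigr => i _; rewrite mulrA.
Qed.

Lemma in_span_sum S (I : eqType) (r : seq I) (c : I -> R) (F : I -> functional) :
  {in r, forall i, c i = 0 \/ in_span S (F i)} ->
  in_span S (fun x => \sum_(i <- r) c i * F i x).
Proof.
elim: r => [|i r IHr] Hr.
  by apply: in_span_ext (in_span0 S) => x _; rewrite big_nil.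
have /IHr IH : {in r, forall i, c i = 0 \/ in_span S (F i)}.
  by move=> j j_in; apply: Hr; rewrite inE j_in orbT.
case: (Hr i (mem_head i r)) => [ci0|Fi].
  by apply: in_span_ext IH => x _; rewrite big_cons ci0 mul0r add0r.
by apply: in_span_ext (in_spanD (in_spanZ (c i) Fi) IH) => x _; rewrite big_cons.
Qed.

Lemma span_inclP S T : (forall f, S f -> in_span T f) -> span_incl S T.
Proof.
move=> ST f [n [a [phi [Sphi fE]]]].
apply: in_span_ext (in_span_sum (r := index_enum 'I_n) (c := a) _) => [x Xx|i _].
  exact: fE.
by right; apply: ST.
Qed.

Lemma in_span_vanish S f x :
  inX x -> (forall g, S g -> g x = 0) -> in_span S f -> f x = 0.
Proof.
move=> Xx Sx0 [n [a [phi [Sphi ->]]]] //.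
by rewrite big1 // => i _; rewrite Sx0 ?mulr0.
Qed.

Lemma sum_split_level n (c : 'I_n -> R) (hh : 'I_n -> G) (x : G -> R) m :
  \sum_(i | (lev (hh i) <= m)%N) c i * x (hh i) =
  \sum_(i | (lev (hh i) < m)%N) c i * x (hh i) +
  \sum_(d <- level m) (\sum_(i | (lev (hh i) <= m)%N) c i * dvec d (hh i)) * x d.
Proof.
rewrite (bigID (fun i => lev (hh i) < m)%N) /=; congr (_ + _).
  by apply: eq_bigl => i; rewrite andb_idl // => /ltnW.
under [RHS]eq_bigr do rewrite mulr_suml.
rewrite exchange_big /= [RHS](bigID (fun i => lev (hh i) < m)%N) /=.
rewrite [X in _ = X + _]big1 ?add0r.
  apply: eq_bigr => i /andP[le_im]; rewrite -leqNgt => le_mi.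
  have him : lev (hh i) = m by apply/eqP; rewrite eqn_leq le_im.
  rewrite -(sum_level_indicator (fun d => c i * x d) him).
  apply: eq_big_seq => d; rewrite mem_level => /eqP dm.
  by rewrite dvec_ge ?dm ?him // [LHS]mulrCA mulrA.
move=> i /andP[_ lt_im]; rewrite big1_seq // => d; rewrite mem_level => /andP[_ /eqP dm].
by rewrite dvec_lt ?dm // mulr0 mul0r.
Qed.

Lemma estar_comb_truncate f n (a : 'I_n -> R) (hh : 'I_n -> G) L :
  (forall x, inX x -> f x = \sum_i a i * x (hh i)) ->
  (forall d, (L < lev d)%N -> f (dvec d) = 0) ->
  forall x, inX x -> f x = \sum_(i | (lev (hh i) <= L)%N) a i * x (hh i).
Proof.
move=> fE f_high.
pose P m := forall x, inX x -> f x = \sum_(i | (lev (hh i) <= m)%N) a i * x (hh i).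
have step m : (L <= m)%N -> P m.+1 -> P m.
  rewrite /P => le_Lm Pm x Xx.
  rewrite Pm // sum_split_level [X in _ + X]big1_seq ?addr0 // => d.
  rewrite mem_level => /andP[_ /eqP dm].
  by rewrite -Pm ?f_high ?mul0r ?dm //; apply: inX_dvec.
have top : P (L + \max_i lev (hh i))%N.
  move=> x Xx; rewrite fE //; apply: eq_bigl => i; symmetry.
  by rewrite (leq_trans (@leq_bigmax _ (fun i => lev (hh i)) i)) ?leq_addl.
elim: (\max_i _)%N top => [|k IHk] Pk; first by rewrite addn0 in Pk.
by apply: IHk; apply: step; rewrite ?leq_addr // -addnS.
Qed.

Section SubsetOfCoordinates.
Variable G' : G -> Prop.

Definition dvec_vanish_on := forall g h, ~ G' g -> G' h -> dvec g h = 0.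

Definition dstars q f := exists g, [/\ G' g, (lev g <= q)%N & f = dstar g].
Definition estars q f := exists g, [/\ G' g, (lev g <= q)%N & f = estar g].
Definition cstars_at q f := exists g, [/\ G' g, lev g = q & f = cstar g].
Definition PE_estars q f := exists g (E : nat_interval),
  [/\ G' g, (lev g <= q)%N & f = (fun x => estar g (PE E x))].

Lemma neq_out_in g h : ~ G' g -> G' h -> h != g.
Proof. by move=> g'g g'h; apply/eqP => hg; rewrite hg in g'h. Qed.

Lemma dvec_vanish_on_cstar :
  dvec_vanish_on <-> forall g h, ~ G' g -> G' h -> cstar h (dvec g) = 0.
Proof.
split=> van g h g'g g'h.
  by rewrite cstar_dvec_neq ?(neq_out_in g'g g'h) //; apply: van.
by rewrite -cstar_dvec_neq ?(neq_out_in g'g g'h) //; apply: van.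
Qed.

Lemma dstars_span_vanish q f g : ~ G' g -> in_span (dstars q) f -> f (dvec g) = 0.
Proof.
move=> g'g; apply: in_span_vanish (inX_dvec g) _ => _ [d [g'd _ ->]].
by rewrite dstar_dvec (negbTE (neq_out_in g'g g'd)).
Qed.

Section Vanishing.
Hypothesis dvec_van : dvec_vanish_on.

Lemma expansion_in_span S h q : G' h ->
  (forall d, G' d -> (lev d <= q)%N -> in_span S (dstar d)) ->
  in_span S (fun x => \sum_(d <- levels_upto q) dstar d x * dvec d h).
Proof.
move=> g'h dS; apply: in_span_ext (in_span_sum (c := fun d => dvec d h) _) => [x _|d].
  by apply: eq_bigr => d _; rewrite mulrC.
rewrite mem_levels_upto => le_dq; case: (pselect (G' d)) => g'd.
  by right; apply: dS.
by left; apply: dvec_van.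
Qed.

Lemma estar_in_dstars_span h q : G' h -> (lev h <= q)%N -> in_span (dstars q) (estar h).
Proof.
move=> g'h le_hq.
apply: in_span_ext (expansion_in_span (q := lev h) g'h _) => [x _|d g'd le_dh].
  exact: estar_expansion.
by apply: in_span_mem; exists d; split=> //; apply: leq_trans le_hq.
Qed.

Lemma cstar_in_PE_estars_span h : G' h -> in_span (PE_estars (lev h).-1) (cstar h).
Proof.
move=> g'h; apply: in_span_ext (expansion_in_span g'h _) => [x _|d g'd le_dh].
  exact: cstar_expansion.
by apply: in_span_mem; exists d, (Ifin (lev d) (lev d)).
Qed.

Lemma dstar_in_estars_span h : G' h -> in_span (estars (lev h)) (dstar h).
Proof.
elim/lev_ind: h => h IH g'h.
have cS : in_span (estars (lev h)) (cstar h).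
  apply: in_span_ext (expansion_in_span g'h _) => [x _|d g'd le_dh].
    exact: cstar_expansion.
  have lt_dh : (lev d < lev h)%N by rewrite -leq_lev_pred.
  apply: sub_in_span (IH d lt_dh g'd) => _ [e [g'e le_ed ->]].
  by exists e; split=> //; apply: leq_trans le_ed (ltnW lt_dh).
have eS : in_span (estars (lev h)) (estar h) by apply: in_span_mem; exists h.
apply: in_span_ext (in_spanD eS (in_spanZ (-1) cS)) => x _.
by rewrite /cstar mulN1r opprB addrC subrK.
Qed.

Lemma dvec_vanish_span_eq q : span_eq (dstars q) (estars q).
Proof.
split; apply: span_inclP => _ [h [g'h le_hq ->]]; last exact: estar_in_dstars_span.
apply: sub_in_span (dstar_in_estars_span g'h) => _ [e [g'e le_eh ->]].
by exists e; split=> //; apply: leq_trans le_hq.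
Qed.

Lemma dvec_vanish_cstars_incl q : span_incl (cstars_at q.+1) (PE_estars q).
Proof.
apply: span_inclP => _ [h [g'h hq ->]].
by have := cstar_in_PE_estars_span g'h; rewrite hq.
Qed.

Lemma dvec_vanish_self_determined : infinite_subset G' -> self_determined G'.
Proof.
move=> infG'; split=> // h g'h.
by apply: sub_in_span (dstar_in_estars_span g'h) => _ [e [g'e _ ->]]; exists e.
Qed.

End Vanishing.

Lemma estars_incl_dvec_vanish q0 :
  (forall q, (q0 <= q)%N -> span_incl (estars q) (dstars q)) -> dvec_vanish_on.
Proof.
move=> incl g h g'g g'h; apply: (dstars_span_vanish (f := estar h) g'g).
apply: (incl _ (leq_maxl q0 (lev h))); apply: in_span_mem.
by exists h; split=> //; apply: leq_maxr.
Qed.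

Lemma cstars_incl_dvec_vanish q0 : (forall g, G' g -> (q0 <= lev g)%N) ->
  span_incl (estars q0) (dstars q0) ->
  (forall q, (q0 <= q)%N -> span_incl (cstars_at q.+1) (PE_estars q)) ->
  dvec_vanish_on.
Proof.
move=> q0_min incl0 incl g h g'g g'h; elim/lev_ind: h g'h => h IH g'h.
case: (ltngtP q0 (lev h)) (q0_min h g'h) => // [lt_q0h|q0h] _; last first.
  apply: (dstars_span_vanish (f := estar h) g'g); apply: incl0; apply: in_span_mem.
  by exists h; rewrite q0h.
have hq : lev h = (lev h).-1.+1 by rewrite prednK ?bd_lev_ge1.
have cS : in_span (PE_estars (lev h).-1) (cstar h).
  by apply: (incl _ _ _ (in_span_mem _)); [rewrite -ltnS -hq | exists h].
rewrite -cstar_dvec_neq ?(neq_out_in g'g g'h) //.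
apply: in_span_vanish (inX_dvec g) _ cS => _ [e [E [g'e le_eh ->]]].
by rewrite /estar PE_dvec_eq0 // IH // -leq_lev_pred.
Qed.

Lemma self_determined_dvec_vanish :
  (forall h, G' h -> in_span (fun f => exists e, G' e /\ f = estar e) (dstar h)) ->
  dvec_vanish_on.
Proof.
move=> sd g h g'g g'h; elim/lev_ind: h g'h => h IH g'h.
have [n [a [phi [phiS dE]]]] := sd h g'h.
have [hh hhE] := fin_all_exists phiS.
have dE' x : inX x -> dstar h x = \sum_i a i * x (hh i).
  by move=> Xx; rewrite dE //; apply: eq_bigr => i _; rewrite (hhE i).2.
have dT x : inX x -> dstar h x = \sum_(i | (lev (hh i) <= lev h)%N) a i * x (hh i).
  apply: (estar_comb_truncate dE') => d lt_hd.
  by rewrite dstar_dvec; case: eqP lt_hd => // ->; rewrite ltnn.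
have := dT _ (inX_dvec g); rewrite dstar_dvec (negbTE (neq_out_in g'g g'h)).
(* the top-level coefficients of the truncated relation are d*_h(d_d) = [h = d] *)
rewrite sum_split_level [X in X + _]big1 ?add0r => [|i lt_ih]; last first.
  by rewrite IH ?mulr0 //; apply: (hhE i).1.
rewrite (eq_big_seq (fun d => (h == d)%:R * dvec g d)) => [|d _]; last first.
  by rewrite -(dT _ (inX_dvec d)) dstar_dvec.
by rewrite sum_level_indicator // => ->.
Qed.

End SubsetOfCoordinates.

End BourgainDelbaen.

Theorem proposition1p5 (R : realType) (B : BDspace R) (G' : bd_G B -> Prop)
  (q0 : nat) :
  infinite_subset G' ->
  (exists g, G' g /\ (bd_lev B g <= q0)%N) ->
  (forall q, (exists g, G' g /\ (bd_lev B g <= q)%N) -> (q0 <= q)%N) ->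
  [<->
    (* (a) *)
    self_determined G';
    (* (b) *)
    (forall q, (q0 <= q)%N ->
       span_eq (fun f => exists g, [/\ G' g, (bd_lev B g <= q)%N & f = dstar g])
               (fun f => exists g, [/\ G' g, (bd_lev B g <= q)%N & f = estar g]));
    (* (c) *)
    (span_eq (fun f => exists g, [/\ G' g, (bd_lev B g <= q0)%N & f = dstar g])
             (fun f => exists g, [/\ G' g, (bd_lev B g <= q0)%N & f = estar g])
     /\ forall q, (q0 <= q)%N ->
       span_incl (fun f => exists g, [/\ G' g, bd_lev B g = q.+1 & f = cstar g])
                 (fun f => exists g (E : nat_interval), [/\ G' g, (bd_lev B g <= q)%N &
                             f = (fun x => estar g (PE E x))]));
    (* (d) *)
    (forall g h, ~ G' g -> G' h -> estar h (dvec g) = 0);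
    (* (e) *)
    (forall g h, ~ G' g -> G' h -> cstar h (dvec g) = 0)].
Proof.
(* only the minimality of q0 is used: it bounds the levels of G' from below *)
move=> infG' _ q0_min.
have q0_le g : G' g -> (q0 <= bd_lev B g)%N by move=> g'g; apply: q0_min; exists g.
tfae.
- by move=> [_ /self_determined_dvec_vanish van] q _; apply: dvec_vanish_span_eq van q.
- move=> span_eqs; have van := estars_incl_dvec_vanish (fun q le_q0q => (span_eqs q le_q0q).2).
  by split=> [|q _]; [apply: dvec_vanish_span_eq van q0 | apply: dvec_vanish_cstars_incl van q].
- by move=> [[_ incl0] incl]; apply: cstars_incl_dvec_vanish q0_le incl0 incl.
- by move/dvec_vanish_on_cstar.
- by move/dvec_vanish_on_cstar => van; apply: dvec_vanish_self_determined van infG'.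
Qed.
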